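(* Let \(m\) be a positive integer that is not a perfect square, and let \(a,b,c\) be positive integers with \(\gcd(a,b^2-c^2m)=1\). Then \[Frob(a,\,b+c\sqrt m)=(a-1)(b+c\sqrt m-1)(1+\sqrt m)+\mathbb N[\sqrt m].\]
   Context: \(\mathbb N\) denotes the set of non-negative integers. \(\mathbb Z[\sqrt m]=\{u+v\sqrt m\mid u,v\in\mathbb Z\}\) and \(\mathbb N[\sqrt m]=\{u+v\sqrt m\mid u,v\in\mathbb N\}\). For \(\alpha_1,\alpha_2\in\mathbb Z[\sqrt m]\), \(SG(\alpha_1,\alpha_2)=\{\lambda_1\alpha_1+\lambda_2\alpha_2\mid \lambda_1,\lambda_2\in\mathbb N[\sqrt m]\}\) and \(Frob(\alpha_1,\alpha_2)=\{w\in\mathbb Z[\sqrt m]\mid w+\mathbb N[\sqrt m]\subseteq SG(\alpha_1,\alpha_2)\}\). *)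

(* Elements u + v*sqrt m of Z[sqrt m] are represented by
   pairs (u, v) : Z * Z; this is faithful since m is not a perfect square,
   so the representation is unique. *)
From Stdlib Require Import ZArith.
Open Scope Z_scope.

Definition zsqrt : Type := (Z * Z)%type.

Definition zs_of (u : Z) : zsqrt := (u, 0).

Definition zs_add (x y : zsqrt) : zsqrt := (fst x + fst y, snd x + snd y).

Definition zs_mul (m : Z) (x y : zsqrt) : zsqrt :=
  (fst x * fst y + m * snd x * snd y, fst x * snd y + snd x * fst y).

Definition in_Nsqrt (x : zsqrt) : Prop := 0 <= fst x /\ 0 <= snd x.

Definition SG (m : Z) (a1 a2 : zsqrt) (x : zsqrt) : Prop :=
  exists l1 l2 : zsqrt, in_Nsqrt l1 /\ in_Nsqrt l2 /\
    x = zs_add (zs_mul m l1 a1) (zs_mul m l2 a2).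

Definition Frob (m : Z) (a1 a2 : zsqrt) (w : zsqrt) : Prop :=
  forall n : zsqrt, in_Nsqrt n -> SG m a1 a2 (zs_add w n).

(* Write β = b + c√m. Since the norm N(β) = b² - c²m is prime to a, β is
   invertible modulo a, so every x ∈ Z[√m] is λ₂β + aλ₁ with the components of
   λ₂ in [0, a); when x ≥ (a-1)(β-1)(1+√m) componentwise the quotient λ₁ is
   non-negative, hence x ∈ SG(a, β).  Conversely, if x = aλ₁ + λ₂β ∈ SG(a, β)
   and x ≡ -β(1+√m) mod a, then a divides (λ₂ + 1 + √m)β, hence λ₂ + 1 + √m,
   which forces λ₂ ≥ (a-1)(1+√m) and x ≥ (a-1)β(1+√m).  Any w in the Frobenius
   set has such an x within distance a-1 above it in each component, which
   gives w ≥ (a-1)(β-1)(1+√m). *)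
From Stdlib Require Import ZArith Lia.
Open Scope Z_scope.

Definition zs_norm (m : Z) (x : zsqrt) : Z := fst x * fst x - snd x * snd x * m.

Definition zs_dvd (d : Z) (x : zsqrt) : Prop := (d | fst x) /\ (d | snd x).

Lemma zs_dvd_of_mul_coprime_norm m d x y :
  Z.gcd d (zs_norm m x) = 1 -> zs_dvd d (zs_mul m x y) -> zs_dvd d y.
Proof.
  destruct x as [b c], y as [s t]; unfold zs_dvd, zs_norm, zs_mul; simpl.
  intros Hg [H1 H2].
  (* multiply by the conjugate b - c√m *)
  split.
  - apply (Z.gauss _ (b * b - c * c * m)); [|exact Hg].
    replace ((b * b - c * c * m) * s)
      with (b * (b * s + m * c * t) - c * m * (b * t + c * s)) by ring.
    apply Z.divide_sub_r; apply Z.divide_mul_r; assumption.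
  - apply (Z.gauss _ (b * b - c * c * m)); [|exact Hg].
    replace ((b * b - c * c * m) * t)
      with (b * (b * t + c * s) - c * (b * s + m * c * t)) by ring.
    apply Z.divide_sub_r; apply Z.divide_mul_r; assumption.
Qed.

Lemma zs_dvd_add_mul_cancel m d l y :
  zs_dvd d (zs_add (zs_mul m l (zs_of d)) y) -> zs_dvd d y.
Proof.
  destruct l as [p q], y as [u v]; unfold zs_dvd, zs_add, zs_mul, zs_of; simpl.
  intros [H1 H2]; split.
  - replace u with (p * d + m * q * 0 + u - p * d) by ring.
    apply Z.divide_sub_r; [exact H1|apply Z.divide_factor_r].
  - replace v with (p * 0 + q * d + v - q * d) by ring.
    apply Z.divide_sub_r; [exact H2|apply Z.divide_factor_r].
Qed.

Lemma zs_divmod m d x y :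
  0 < d -> Z.gcd d (zs_norm m x) = 1 ->
  exists q l, (0 <= fst l < d /\ 0 <= snd l < d) /\
    y = zs_add (zs_mul m q (zs_of d)) (zs_mul m l x).
Proof.
  intros Hd Hg.
  destruct (Z.gcd_bezout _ _ _ Hg) as [u [v Huv]].
  destruct x as [b c], y as [X Y]; unfold zs_norm in Huv; simpl in Huv.
  (* l₀ = v·y·conj(x) satisfies l₀x = v N(x) y = y - u d y; reduce it mod d *)
  set (e1 := v * (X * b - m * Y * c)).
  set (e2 := v * (Y * b - X * c)).
  exists (u * X + e1 / d * b + e2 / d * c * m, u * Y + e1 / d * c + e2 / d * b),
         (e1 mod d, e2 mod d).
  simpl; split.
  - split; apply Z.mod_pos_bound; exact Hd.
  - rewrite !Z.mod_eq by lia.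
    unfold zs_add, zs_mul, zs_of; simpl; f_equal.
    + rewrite <- (Z.mul_1_r X) at 1; rewrite <- Huv; unfold e1, e2; ring.
    + rewrite <- (Z.mul_1_r Y) at 1; rewrite <- Huv; unfold e1, e2; ring.
Qed.

Lemma exists_congr_in_window d r w :
  0 < d -> exists x, w <= x < w + d /\ (d | x + r).
Proof.
  intros Hd; exists (w + (- (w + r)) mod d).
  pose proof (Z.mod_pos_bound (- (w + r)) d Hd).
  split; [lia|].
  exists (- (- (w + r) / d)); rewrite Z.mod_eq by lia; ring.
Qed.

Section Frobenius.

Variables m a b c : Z.
Hypothesis m_ge0 : 0 <= m.
Hypothesis a_gt0 : 0 < a.
Hypothesis b_ge0 : 0 <= b.
Hypothesis c_ge0 : 0 <= c.
Hypothesis coprime_norm : Z.gcd a (zs_norm m (b, c)) = 1.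

Lemma SG_of_lower_bounds x :
  (a - 1) * (b - 1 + c * m) <= fst x -> (a - 1) * (b - 1 + c) <= snd x ->
  SG m (zs_of a) (b, c) x.
Proof.
  intros HX HY.
  destruct (zs_divmod m a (b, c) x a_gt0 coprime_norm)
    as [[p q] [[s t] [[Hs Ht] Hx]]].
  simpl in Hs, Ht.
  exists (p, q), (s, t); unfold in_Nsqrt; simpl.
  split; [|split; [lia|exact Hx]].
  rewrite Hx in HX, HY; unfold zs_add, zs_mul, zs_of in HX, HY; simpl in *.
  assert (- a < p * a) by nia.
  assert (- a < q * a) by nia.
  split; nia.
Qed.

Lemma SG_lower_bound x :
  SG m (zs_of a) (b, c) x ->
  zs_dvd a (zs_add x (zs_mul m (b, c) (1, 1))) ->
  (a - 1) * (b + c * m) <= fst x /\ (a - 1) * (b + c) <= snd x.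
Proof.
  intros [l1 [[s t] [Hl1 [[Hs Ht] ->]]]] Hdvd.
  assert (Hl : zs_dvd a (zs_add (s, t) (1, 1))).
  { apply (zs_dvd_of_mul_coprime_norm m a (b, c)); [exact coprime_norm|].
    apply (zs_dvd_add_mul_cancel m a l1).
    replace (zs_add (zs_mul m l1 (zs_of a)) (zs_mul m (b, c) (zs_add (s, t) (1, 1))))
      with (zs_add (zs_add (zs_mul m l1 (zs_of a)) (zs_mul m (s, t) (b, c)))
                   (zs_mul m (b, c) (1, 1))); [exact Hdvd|].
    destruct l1; unfold zs_add, zs_mul, zs_of; simpl; f_equal; ring. }
  destruct l1 as [p q], Hl1 as [Hp Hq], Hl as [Hs1 Ht1]; simpl in *.
  apply Z.divide_pos_le in Hs1; [|lia].
  apply Z.divide_pos_le in Ht1; [|lia].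
  split; nia.
Qed.

Lemma Frob_iff_lower_bounds w :
  Frob m (zs_of a) (b, c) w <->
  (a - 1) * (b - 1 + c * m) <= fst w /\ (a - 1) * (b - 1 + c) <= snd w.
Proof.
  split.
  - intros HF.
    destruct (exists_congr_in_window a (b + c * m) (fst w) a_gt0) as [X [HX HXa]].
    destruct (exists_congr_in_window a (b + c) (snd w) a_gt0) as [Y [HY HYa]].
    destruct (SG_lower_bound (X, Y)) as [HX' HY'].
    + replace (X, Y) with (zs_add w (X - fst w, Y - snd w))
        by (unfold zs_add; simpl; f_equal; ring).
      apply HF; unfold in_Nsqrt; simpl; lia.
    + unfold zs_dvd, zs_add, zs_mul; simpl; split.
      * replace (X + (b * 1 + m * c * 1)) with (X + (b + c * m)) by ring; exact HXa.
      * replace (Y + (b * 1 + c * 1)) with (Y + (b + c)) by ring; exact HYa.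
    + simpl in HX', HY'; split; nia.
  - intros [H1 H2] n [Hn1 Hn2].
    apply SG_of_lower_bounds; unfold zs_add; simpl; lia.
Qed.

End Frobenius.

Lemma Frobenius_element_eq m a b c :
  zs_mul m (zs_mul m (zs_of (a - 1)) (b - 1, c)) (1, 1) =
  ((a - 1) * (b - 1 + c * m), (a - 1) * (b - 1 + c)).
Proof. unfold zs_mul, zs_of; simpl; f_equal; ring. Qed.

Theorem theorem2 (m a b c : Z) :
  0 < m -> ~ (exists k : Z, m = k * k) ->
  0 < a -> 0 < b -> 0 < c ->
  Z.gcd a (b * b - c * c * m) = 1 ->
  forall w : zsqrt,
    Frob m (zs_of a) (b, c) w <->
    exists n : zsqrt, in_Nsqrt n /\
      w = zs_add (zs_mul m (zs_mul m (zs_of (a - 1)) (b - 1, c)) (1, 1)) n.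
Proof.
  (* m not being a square only makes the pair encoding of Z[√m] faithful *)
  intros Hm _ Ha Hb Hc Hg w.
  rewrite Frob_iff_lower_bounds by (exact Hg || lia).
  rewrite Frobenius_element_eq.
  destruct w as [w1 w2]; simpl; split.
  - intros [H1 H2].
    exists (w1 - (a - 1) * (b - 1 + c * m), w2 - (a - 1) * (b - 1 + c)).
    unfold in_Nsqrt, zs_add; simpl; split; [lia|f_equal; ring].
  - intros [[n1 n2] [[Hn1 Hn2] E]]; injection E as -> ->; simpl in *; lia.
Qed.
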